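(* Let $\alpha\in(0,1)$. For all integers $k\ge1$ and $0\le a\le k$, $$\sum_{j=1}^k(-\alpha)^{k-j}q_{k,j,a}(1)=\begin{cases}T(\tfrac k2,\tfrac k2)\,(\alpha(\alpha-1))^{k/2}-2\alpha^k&\text{if }a=0\text{ and }k\text{ is even},\\ T(\tfrac{k+a}2,\tfrac{k-a}2)\,(\alpha(\alpha-1))^{(k-a)/2}&\text{if }a>0\text{ and }a\equiv k\pmod 2,\\ 0&\text{otherwise.}\end{cases}$$
   Context: For $n\ge1$ and $0\le j\le n$, $T(n,j)=\binom{n-1}{j}+2\binom{n-1}{j-1}$, and $T(0,0)=1$. For $k\ge1$ and a nonempty $S=\{s_1<\dots<s_j\}\subseteq[k]$, define $p_1(S)=s_2-s_1,\dots,p_{j-1}(S)=s_j-s_{j-1}$, $p_j(S)=k+s_1-s_j$. For $1\le j\le k$ and $0\le a\le j$ define $$q_{k,j,a}(x)=\sum_{S\subseteq[k],\,|S|=j}\ \sum_{A\subseteq[j],\,|A|=a}\ \prod_{i=1}^j\Big(\sum_{b=0}^{p_i(S)-1}(-1)^{p_i(S)-1-b}x^b+(-1)^{p_i(S)}\mathbf 1\{i\notin A\}\Big),$$ and set $q_{k,0,0}=0$ and $q_{k,j,a}=0$ when $a>j$. *)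

From mathcomp Require Import all_boot all_order all_algebra.
Set Implicit Arguments. Unset Strict Implicit. Unset Printing Implicit Defensive.
Import Order.TTheory GRing.Theory Num.Theory.
Local Open Scope ring_scope.

Definition Tnum (n j : nat) : nat :=
  if n == 0%N then (j == 0%N : nat)
  else ('C(n.-1, j) + (if j == 0%N then 0 else 2 * 'C(n.-1, j.-1)))%N.

(* The element x : 'I_k of S represents the integer x+1 of [k] = {1..k}.
   enum S lists the elements in increasing order, so s_1 < ... < s_j. *)
Definition Sseq (k : nat) (S : {set 'I_k}) : seq nat :=
  [seq (val x).+1 | x <- enum S].

(* pgap k S i = p_{i+1}(S) for 0 <= i < j = #|S| (0-indexed). *)
Definition pgap (k : nat) (S : {set 'I_k}) (i : nat) : nat :=
  let s := Sseq S in
  let j := size s in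
  if (i.+1 < j)%N then (nth 0 s i.+1 - nth 0 s i)%N
  else (k + nth 0 s 0 - nth 0 s j.-1)%N.

Definition qfactor (R : ringType) (p : nat) (x : R) (inA : bool) : R :=
  \sum_(b < p) (-1) ^+ (p.-1 - b) * x ^+ b + (-1) ^+ p * (if inA then 0 else 1).

Definition q (R : ringType) (k j a : nat) (x : R) : R :=
  if j == 0%N then 0 else
  \sum_(S : {set 'I_k} | #|S| == j)
    \sum_(A : {set 'I_j} | #|A| == a)
      \prod_(i < j) qfactor (pgap S i) x (i \in A).

From mathcomp Require Import all_boot all_order all_algebra.
From mathcomp Require Import zify ring.
Set Implicit Arguments. Unset Strict Implicit. Unset Printing Implicit Defensive.
Import Order.TTheory GRing.Theory Num.Theory.

(** At [x = 1] each factor of [q] is the indicator of "[i \in A] iff the gap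
    [p_i(S)] is odd", so [q k j a 1] counts the [j]-subsets of [[k]] with exactly
    [a] odd cyclic gaps, and the left-hand side sums [(-alpha)^(k - |S|)] over the
    nonempty [S] with [a] odd gaps. Read as a bit string, [S] is a closed walk of a
    2x2 transfer matrix whose state is the parity of the current gap, so the sum is
    the trace of its [k]-th power, up to the all-zero string, which contributes
    [2 (-alpha)^k] when [k] is even and [a = 0]. Cayley-Hamilton gives the trace
    recurrence [t_(k+2)(a) = t_(k+1)(a-1) + alpha (alpha - 1) t_k(a)], and Pascal's
    rule for [T] shows the closed form obeys it too. *)

Fixpoint ones (bs : seq bool) : seq nat :=
  if bs is b :: bs' then
    if b then 0 :: map succn (ones bs') else map succn (ones bs')
  else [::].

(* The state [s] is the parity of the number of zeros read since the last one;
   the gap closed by the next one is odd exactly when [s] is [false]. *)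
Fixpoint gap_parity (s : bool) (bs : seq bool) : bool :=
  if bs is b :: bs' then gap_parity (~~ b && ~~ s) bs' else s.

Fixpoint odd_gap_count (s : bool) (bs : seq bool) : nat :=
  if bs is b :: bs' then (b && ~~ s) + odd_gap_count (~~ b && ~~ s) bs' else 0.

Fixpoint odd_steps (l : seq nat) : nat :=
  match l with x :: ((y :: _) as l') => odd (y - x) + odd_steps l' | _ => 0 end.
Arguments odd_steps : simpl nomatch.

Definition odd_cyclic_gaps (k : nat) (l : seq nat) : nat :=
  odd_steps l + odd (k + head 0 l - last 0 l).

Lemma size_ones bs : size (ones bs) = count id bs.
Proof. by elim: bs => //= [[]] bs IH; rewrite /= size_map IH. Qed.

Lemma has_ones bs : has id bs -> ones bs != [::].
Proof. by rewrite -size_eq0 size_ones has_count lt0n. Qed.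

Lemma mem_ones_lt bs i : i \in ones bs -> i < size bs.
Proof.
elim: bs i => //= b bs IH i.
have succ_lt : i \in map succn (ones bs) -> i < (size bs).+1 by case/mapP => j /IH ? ->.
by case: b; rewrite ?inE; [case/orP => [/eqP -> //|] |]; apply: succ_lt.
Qed.

Lemma odd_steps_map_succ l : odd_steps (map succn l) = odd_steps l.
Proof. by elim: l => // x [|y l] IH //=; rewrite subSS; congr (_ + _); exact: IH. Qed.

Lemma hasNid_nseq bs : ~~ has id bs -> bs = nseq (size bs) false.
Proof. by move=> /hasPn bs0; apply/all_pred1P/allP => b /bs0; case: b. Qed.

Lemma ones_nseq_false n : ones (nseq n false) = [::].
Proof. by elim: n => //= n ->. Qed.

Lemma gap_parity_nseq_false s n : gap_parity s (nseq n false) = s (+) odd n.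
Proof. by elim: n s => [|n IH] s /=; rewrite ?addbF // IH; case: s; case: (odd n). Qed.

Lemma odd_gap_count_nseq_false s n : odd_gap_count s (nseq n false) = 0.
Proof. by elim: n s => //= n IH s; rewrite IH. Qed.

Lemma odd_gap_count_ones s bs : has id bs ->
  odd_gap_count s bs = (s == odd (head 0 (ones bs))) + odd_steps (ones bs).
Proof.
elim: bs s => // b bs IH s; case: b => /= [_|bs1]; last first.
  rewrite IH // odd_steps_map_succ.
  by case: (ones bs) (has_ones bs1) => [//|h t _] /=; case: s; case: (odd h).
have [bs1|/hasNid_nseq ->] := boolP (has id bs).
  rewrite IH //; case: (ones bs) (has_ones bs1) => [//|h t _] /=.
  rewrite -[h.+1 :: _]/(map succn (h :: t)) odd_steps_map_succ.
  by case: s; case: (odd h).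
by rewrite ones_nseq_false odd_gap_count_nseq_false; case: s.
Qed.

Lemma gap_parity_ones s bs : has id bs ->
  gap_parity s bs = odd (size bs - (last 0 (ones bs)).+1).
Proof.
elim: bs s => // b bs IH s /=; case: b => /= [_|bs1]; last first.
  rewrite IH //; case: (ones bs) (has_ones bs1) => [//|h t _] /=.
  rewrite (last_map succn); lia.
have [bs1|/hasNid_nseq ->] := boolP (has id bs).
  rewrite IH //; case: (ones bs) (has_ones bs1) => [//|h t _] /=.
  by rewrite (last_map succn).
by rewrite ones_nseq_false gap_parity_nseq_false size_nseq subn1.
Qed.

Lemma odd_gap_count_cycle s bs : has id bs ->
  odd_gap_count (gap_parity s bs) bs = odd_cyclic_gaps (size bs) (ones bs).
Proof.
move=> bs1; rewrite odd_gap_count_ones // gap_parity_ones // /odd_cyclic_gaps addnC.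
have := @mem_ones_lt bs (last 0 (ones bs)).
case: (ones bs) (has_ones bs1) => [//|h t _] /= /(_ (mem_last h t)) lt_last.
congr (_ + _); have -> : size bs + h - last h t = (size bs - (last h t).+1) + h + 1 by lia.
by rewrite !oddD /=; case: (odd (_ - _)); case: (odd h).
Qed.

Local Open Scope ring_scope.

Fixpoint sum_bits (V : nmodType) (n : nat) (F : seq bool -> V) : V :=
  if n is n'.+1 then
    sum_bits n' (fun bs => F (true :: bs)) + sum_bits n' (fun bs => F (false :: bs))
  else F [::].

Lemma eq_sum_bits (V : nmodType) n (F G : seq bool -> V) :
  (forall bs, size bs = n -> F bs = G bs) -> sum_bits n F = sum_bits n G.
Proof.
elim: n F G => [|n IH] F G FG /=; first exact: FG.
by congr (_ + _); apply: IH => bs sz_bs; apply: FG; rewrite /= sz_bs.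
Qed.

Lemma sum_bitsD (V : nmodType) n (F G : seq bool -> V) :
  sum_bits n (fun bs => F bs + G bs) = sum_bits n F + sum_bits n G.
Proof. by elim: n F G => [|n IH] F G //=; rewrite !IH addrACA. Qed.

Lemma sum_bitsB (V : zmodType) n (F G : seq bool -> V) :
  sum_bits n (fun bs => F bs - G bs) = sum_bits n F - sum_bits n G.
Proof. by elim: n F G => [|n IH] F G //=; rewrite !IH opprD addrACA. Qed.

Lemma sum_bits_mulr (R : pzSemiRingType) n c (F : seq bool -> R) :
  sum_bits n (fun bs => c * F bs) = c * sum_bits n F.
Proof. by elim: n F => [|n IH] F //=; rewrite !IH mulrDr. Qed.

Lemma sum_bits0 (V : nmodType) n : sum_bits n (fun _ => 0 : V) = 0.
Proof. by elim: n => //= n ->; rewrite addr0. Qed.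

Lemma sum_bits_delta (R : pzSemiRingType) (c : seq bool) (F : seq bool -> R) :
  sum_bits (size c) (fun bs => (bs == c)%:R * F bs) = F c.
Proof.
elim: c F => [|b c IH] F /=; first by rewrite mul1r.
have vanish b' : b' != b ->
    sum_bits (size c) (fun bs => (b' :: bs == b :: c)%:R * F (b' :: bs)) = 0.
  move=> /negbTE b'b; rewrite -(sum_bits0 _ (size c)).
  by apply: eq_sum_bits => bs _; rewrite eqseq_cons b'b mul0r.
have keep : sum_bits (size c) (fun bs => (b :: bs == b :: c)%:R * F (b :: bs)) = F (b :: c).
  by rewrite -(IH (fun bs => F (b :: bs))); apply: eq_sum_bits => bs _; rewrite eqseq_cons eqxx.
by move: keep vanish; case: b => keep vanish; rewrite keep vanish // ?addr0 ?add0r.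
Qed.

Section TransferMatrix.

Variables (R : comPzRingType) (al : R).

Definition walk_term (s t : bool) (a : nat) (bs : seq bool) : R :=
  (- al) ^+ count negb bs * ((gap_parity s bs == t) && (odd_gap_count s bs == a))%:R.

Definition walk_weight (n : nat) (s t : bool) (a : nat) : R :=
  sum_bits n (walk_term s t a).

Definition trace_weight (n a : nat) : R :=
  walk_weight n false false a + walk_weight n true true a.

Definition shift (f : nat -> R) (a : nat) : R := if a is a'.+1 then f a' else 0.

Lemma shiftS f a : shift f a.+1 = f a.
Proof. by []. Qed.

Lemma walk_weightS_true n t a :
  walk_weight n.+1 true t a = (1 - al) * walk_weight n false t a.
Proof.
rewrite /walk_weight /= mulrBl mul1r -mulNr -sum_bits_mulr.
by congr (_ + _); apply: eq_sum_bits => bs _; rewrite /walk_term /= ?exprS mulrA.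
Qed.

Lemma walk_weightS_false n t a :
  walk_weight n.+1 false t a = shift (walk_weight n false t) a - al * walk_weight n true t a.
Proof.
rewrite /walk_weight /= -mulNr -sum_bits_mulr; congr (_ + _); last first.
  by apply: eq_sum_bits => bs _; rewrite /walk_term /= exprS mulrA.
case: a => [|a] /=; last by apply: eq_sum_bits => bs _; rewrite /walk_term /= eqSS.
by rewrite -(sum_bits0 _ n); apply: eq_sum_bits => bs _; rewrite /walk_term /= andbF mulr0.
Qed.

(* Cayley-Hamilton for the transfer matrix [[y, -al], [1 - al, 0]], where [y]
   marks an odd gap and multiplication by [y] is [shift]. *)
Lemma trace_weightSS n a :
  trace_weight n.+2 a = shift (trace_weight n.+1) a + al * (al - 1) * trace_weight n a.
Proof.
case: a => [|a]; rewrite /trace_weight;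
by rewrite !(walk_weightS_true, walk_weightS_false, shiftS) /=; ring.
Qed.

Lemma trace_weight0 a : trace_weight 0 a = (a == 0%N)%:R *+ 2.
Proof. by rewrite /trace_weight /walk_weight /walk_term /= mul1r mulr2n (eq_sym 0%N). Qed.

Lemma trace_weight1 a : trace_weight 1 a = (a == 1%N)%:R.
Proof.
by rewrite /trace_weight /walk_weight /walk_term /= !mulr0 !addr0 mul1r (eq_sym 1%N).
Qed.

End TransferMatrix.

Lemma Tnum_pascal n m : (0 < n)%N -> Tnum n.+1 m.+1 = (Tnum n m.+1 + Tnum n m)%N.
Proof.
by case: n => [//|n] _; rewrite /Tnum /=; case: m => [|m] /=; rewrite !binS ?bin0; lia.
Qed.

Lemma Tnum_n0 n : (0 < n)%N -> Tnum n.+1 0 = Tnum n 0.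
Proof. by case: n => [//|n] _; rewrite /Tnum /= !bin0. Qed.

Lemma Tnum_small n m : (0 < n < m)%N -> Tnum n m = 0%N.
Proof.
case: n => [//|n] /= lt_nm; rewrite /Tnum /=.
by case: m lt_nm => [//|m] lt_nm /=; rewrite !bin_small //; lia.
Qed.

Section ClosedForm.

Variables (R : comPzRingType) (al : R).

Definition closed_form (k a : nat) : R :=
  if (a <= k)%N && (odd a == odd k) then
    (Tnum (k + a)./2 (k - a)./2)%:R * (al * (al - 1)) ^+ (k - a)./2
  else 0.

Lemma closed_formE a m :
  closed_form (a + m.*2) a = (Tnum (a + m) m)%:R * (al * (al - 1)) ^+ m.
Proof.
rewrite /closed_form ifT; last by rewrite leq_addr oddD odd_double addbF eqxx.
have -> : ((a + m.*2 + a)./2 = a + m)%N by lia.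
by have -> : ((a + m.*2 - a)./2 = m)%N by lia.
Qed.

Lemma closed_form_out k a : ~~ ((a <= k)%N && (odd a == odd k)) -> closed_form k a = 0.
Proof. by move=> /negbTE out; rewrite /closed_form out. Qed.

Lemma closed_formSS n a : (0 < n)%N ->
  closed_form n.+2 a = shift (closed_form n.+1) a + al * (al - 1) * closed_form n a.
Proof.
move=> n_gt0.
have [inside|] := boolP ((a <= n.+2)%N && (odd a == odd n.+2)); last first.
  move=> out; rewrite closed_form_out //; case: a out => [|a] out /=.
    by rewrite closed_form_out ?mulr0 ?addr0 //; lia.
  by rewrite !closed_form_out ?mulr0 ?addr0 //; lia.
have [m def_n] : exists m, n.+2 = (a + m.*2)%N by exists ((n.+2 - a)./2); lia.
case: a inside def_n => [|a] _ def_n /=.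
  case: m def_n => [|m] def_n; first by lia.
  have -> : n.+2 = (0 + m.+1.*2)%N by lia.
  have -> : n = (0 + m.*2)%N by lia.
  rewrite !closed_formE add0r !add0n Tnum_pascal; last by lia.
  by rewrite Tnum_small ?add0n ?exprS; [ring | lia].
case: m def_n => [|m] def_n.
  have -> : n.+2 = (a.+1 + 0.*2)%N by lia.
  have -> : n.+1 = (a + 0.*2)%N by lia.
  rewrite !closed_formE closed_form_out; last by lia.
  by rewrite mulr0 addr0 !addn0 Tnum_n0 //; lia.
have -> : n.+2 = (a.+1 + m.+1.*2)%N by lia.
have -> : n.+1 = (a + m.+1.*2)%N by lia.
have -> : n = (a.+1 + m.*2)%N by lia.
rewrite !closed_formE addnS Tnum_pascal; last by lia.
by rewrite natrD mulrDl exprS addSn -addnS; ring.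
Qed.

Lemma trace_weight_closed_form k a : (0 < k)%N -> trace_weight al k a = closed_form k a.
Proof.
elim/ltn_ind: k a => [[//|[|[|n]]]] IH a _.
- by rewrite trace_weight1 /closed_form; case: a => [|[|a]] //=; rewrite /Tnum /= mulr1.
- rewrite trace_weightSS /closed_form.
  case: a => [|[|[|a]]] /=; rewrite ?trace_weight1 ?trace_weight0 /=.
  + by rewrite add0r /Tnum /= expr1 mulrC.
  + by rewrite mul0rn mulr0 addr0.
  + by rewrite mul0rn mulr0 addr0 /Tnum /= expr0 mulr1.
  + by rewrite mul0rn mulr0 addr0.
rewrite trace_weightSS closed_formSS // IH //; congr (_ + _).
by case: a => [|a] //=; rewrite IH.
Qed.

End ClosedForm.

Lemma sorted_val_enum n (X : {set 'I_n}) : sorted ltn (map val (enum X)).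
Proof.
apply: (subseq_sorted ltn_trans _ (iota_ltn_sorted 0 n)).
by rewrite -val_enum_ord; apply: map_subseq; rewrite enumT; apply: filter_subseq.
Qed.

Lemma val_enum_eq n (X : {set 'I_n}) (l : seq nat) : sorted ltn l ->
  (forall i, (i \in l) = [exists x in X, val x == i]) -> map val (enum X) = l.
Proof.
move=> sorted_l mem_l; apply: (irr_sorted_eq ltn_trans ltnn) => //.
  exact: sorted_val_enum.
move=> i; rewrite mem_l; apply/mapP/existsP => [[x Xx ->]|[x /andP [Xx /eqP <-]]].
  by exists x; rewrite -mem_enum Xx eqxx.
by exists x; rewrite ?mem_enum.
Qed.

Lemma val_enum_lift n (S : {set 'I_n}) :
  map val (enum (lift ord0 @: S)) = map succn (map val (enum S)).
Proof.
apply: val_enum_eq; first by rewrite sorted_map; exact: sorted_val_enum.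
move=> i; apply/mapP/existsP => [[_ /mapP [x + ->] ->]|].
  by rewrite mem_enum => Sx; exists (lift ord0 x); rewrite imset_f //=.
case=> y /andP [/imsetP [x Sx ->] /eqP <-].
by exists (val x); rewrite // map_f ?mem_enum.
Qed.

Lemma val_enum_lift0 n (S : {set 'I_n}) :
  map val (enum (ord0 |: lift ord0 @: S)) = 0%N :: map succn (map val (enum S)).
Proof.
apply: val_enum_eq.
  rewrite /= path_sortedE; last exact: ltn_trans.
  rewrite sorted_map sorted_val_enum andbT.
  by apply/allP => x /mapP [y _ ->].
move=> i; rewrite inE; apply/orP/existsP => [[/eqP ->|/mapP [_ /mapP [x + ->] ->]]|].
- by exists ord0; rewrite !inE eqxx.
- by rewrite mem_enum => Sx; exists (lift ord0 x); rewrite !inE imset_f ?orbT //=.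
case=> y /andP []; rewrite !inE => /orP [/eqP -> /eqP <- | /imsetP [x Sx ->] /eqP <-].
  by left.
by right; apply/mapP; exists (val x); rewrite ?map_f ?mem_enum.
Qed.

Lemma lift0_eq0 n (j : 'I_n) : (lift ord0 j == ord0) = false.
Proof. by rewrite eq_sym (negbTE (neq_lift _ _)). Qed.

Lemma sum_set_ord_lift (V : nmodType) n (G : {set 'I_n.+1} -> V) :
  \sum_(S : {set 'I_n.+1}) G S =
  \sum_(S : {set 'I_n}) (G (lift ord0 @: S) + G (ord0 |: lift ord0 @: S)).
Proof.
rewrite big_split /= addrC (bigID (fun S : {set 'I_n.+1} => ord0 \in S)) /=.
have ord0_lift (S : {set 'I_n}) : ord0 \notin lift ord0 @: S.
  by apply/imsetP => [[y _ /eqP]]; rewrite eq_sym lift0_eq0.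
have lift_unlift0 (S : {set 'I_n.+1}) :
    lift ord0 @: [set j : 'I_n | lift ord0 j \in S] = S :\ ord0.
  apply/setP => x; rewrite !inE; case: (unliftP ord0 x) => [j ->|->].
    by rewrite mem_imset ?inE ?lift0_eq0 //; exact: lift_inj.
  by rewrite eqxx (negbTE (ord0_lift _)).
have unlift0_lift (S : {set 'I_n}) : [set j | lift ord0 j \in lift ord0 @: S] = S.
  by apply/setP => j; rewrite inE mem_imset //; exact: lift_inj.
congr (_ + _).
  rewrite (reindex_onto (fun S : {set 'I_n} => ord0 |: lift ord0 @: S)
                        (fun S : {set 'I_n.+1} => [set j | lift ord0 j \in S])) /=.
    apply: eq_bigl => S; rewrite !inE eqxx /=; apply/eqP/setP => j.
    by rewrite !inE lift0_eq0 /= mem_imset //; exact: lift_inj.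
  by move=> S S0; rewrite lift_unlift0 setD1K.
rewrite (reindex_onto (fun S : {set 'I_n} => lift ord0 @: S)
                      (fun S : {set 'I_n.+1} => [set j | lift ord0 j \in S])) /=.
  by apply: eq_bigl => S; rewrite ord0_lift unlift0_lift eqxx.
by move=> S S0; rewrite lift_unlift0; apply/setDidPl; rewrite disjoint_sym disjoints1.
Qed.

Lemma sum_set_bits (V : nmodType) k (H : seq nat -> V) :
  \sum_(S : {set 'I_k}) H (map val (enum S)) = sum_bits k (fun bs => H (ones bs)).
Proof.
elim: k H => [|k IH] H.
  rewrite (big_pred1 set0) /=; first by rewrite enum_set0.
  by move=> S; apply/esym/eqP/setP => [[]].
rewrite sum_set_ord_lift.
under eq_bigr => S _ do rewrite val_enum_lift val_enum_lift0.
by rewrite (IH (fun l => H (map succn l) + H (0%N :: map succn l))) sum_bitsD addrC.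
Qed.

Lemma sum_alternating_signs (R : pzRingType) p :
  \sum_(b < p) (-1 : R) ^+ (p.-1 - b) = (odd p)%:R.
Proof.
elim: p => [|p IH]; first by rewrite big_ord0.
rewrite big_ord_recr /= subnn expr0.
have -> : \sum_(b < p) (-1 : R) ^+ (p - widen_ord (leqnSn p) b) =
          - \sum_(b < p) (-1 : R) ^+ (p.-1 - b).
  rewrite -sumrN; apply: eq_bigr => b _ /=.
  have -> : (p - b = (p.-1 - b).+1)%N by have := ltn_ord b; lia.
  by rewrite exprS mulN1r.
by rewrite IH; case: (odd p); rewrite ?addNr ?oppr0 ?add0r.
Qed.

Lemma qfactor1 (R : nzRingType) p (inA : bool) :
  qfactor p (1 : R) inA = (inA == odd p)%:R.
Proof.
rewrite /qfactor; under eq_bigr do rewrite expr1n mulr1.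
rewrite sum_alternating_signs -signr_odd.
by case: (odd p); case: inA; rewrite /= ?expr1 ?expr0 ?mulr0 ?mulr1 ?addr0 ?add0r ?subrr.
Qed.

Lemma prodr_nat_bool (R : comPzSemiRingType) (I : finType) (F : I -> bool) :
  \prod_(i : I) ((F i)%:R : R) = [forall i, F i]%:R.
Proof.
have [allF|/forallPn [i Fi]] := boolP [forall i, F i].
  by rewrite big1 // => i _; rewrite (forallP allF i).
by rewrite (bigD1 i) //= (negbTE Fi) mul0r.
Qed.

Lemma card_set_nat_sum (I : finType) (P : pred I) :
  #|[set i | P i]| = (\sum_(i : I) P i)%N.
Proof.
by rewrite -sum1_card big_mkcond; apply: eq_bigr => i _; rewrite inE; case: (P i).
Qed.

(* At [x = 1] the factor for [i] is the indicator of [i \in A <-> p_i odd], so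
   only [A = {i | p_i odd}] survives. *)
Lemma q_at1 (R : comNzRingType) k j a : (0 < j)%N ->
  q k j a (1 : R) =
  \sum_(S : {set 'I_k} | #|S| == j) ((\sum_(i < j) odd (pgap S i))%N == a)%:R.
Proof.
move=> j_gt0; rewrite /q gtn_eqF //; apply: eq_bigr => S _.
set O := [set i : 'I_j | odd (pgap S i)].
have prod_O (A : {set 'I_j}) :
    \prod_(i < j) qfactor (pgap S i) (1 : R) (i \in A) = (A == O)%:R.
  under eq_bigr do rewrite qfactor1.
  rewrite prodr_nat_bool; congr (nat_of_bool _)%:R; apply/forallP/eqP => [AO|->].
    by apply/setP => i; rewrite inE; exact/eqP/(AO i).
  by move=> i; rewrite inE.
under eq_bigr do rewrite prod_O.
rewrite -card_set_nat_sum -/O.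
have [<-|cardO] := eqVneq #|O| a.
  by rewrite (bigD1 O) //= eqxx big1 ?addr0 // => A /andP [_ /negbTE ->].
by rewrite big1 // => A /eqP cardA; case: eqP => // AO; rewrite -AO cardA eqxx in cardO.
Qed.

Lemma odd_steps_nth l :
  odd_steps l = (\sum_(i < (size l).-1) odd (nth 0 l i.+1 - nth 0 l i))%N.
Proof.
elim: l => [|x [|y l] IH]; rewrite ?big_ord0 //.
by rewrite [odd_steps _]/= IH big_ord_recl.
Qed.

Lemma odd_cyclic_gaps_map_succ k l :
  odd_cyclic_gaps k (map succn l) = odd_cyclic_gaps k l.
Proof.
rewrite /odd_cyclic_gaps odd_steps_map_succ; case: l => [//|h t].
by rewrite [head _ _]/= [last _ _]/= (last_map succn) addnS subSS.
Qed.

Lemma sum_odd_cyclic_gaps k l : l != [::] ->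
  (\sum_(i < size l) odd (if i.+1 < size l then nth 0 l i.+1 - nth 0 l i
                          else k + nth 0 l 0 - nth 0 l (size l).-1))%N =
  odd_cyclic_gaps k l.
Proof.
case: l => [//|h t] _; rewrite /odd_cyclic_gaps odd_steps_nth big_ord_recr /= ltnn.
congr (_ + _)%N; first by apply: eq_bigr => i _; rewrite ltnS ltn_ord.
by rewrite -[size t]/((size (h :: t)).-1) nth_last.
Qed.

Lemma sum_odd_pgap k (S : {set 'I_k}) : (0 < #|S|)%N ->
  (\sum_(i < #|S|) odd (pgap S i))%N = odd_cyclic_gaps k (map val (enum S)).
Proof.
have Sseq_val : Sseq S = map succn (map val (enum S)) by rewrite /Sseq -map_comp.
have card_Sseq : #|S| = size (Sseq S) by rewrite Sseq_val !size_map cardE.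
rewrite card_Sseq lt0n size_eq0 => /(sum_odd_cyclic_gaps k) gaps.
by rewrite -odd_cyclic_gaps_map_succ -Sseq_val -gaps.
Qed.

Definition gap_weight (R : pzRingType) (al : R) (k a : nat) (l : seq nat) : R :=
  if l == [::] then 0 else (- al) ^+ (k - size l) * (odd_cyclic_gaps k l == a)%:R.

Lemma sum_q1_gap_weight (R : comNzRingType) (al : R) k a :
  \sum_(1 <= j < k.+1) (- al) ^+ (k - j) * q k j a (1 : R) =
  \sum_(S : {set 'I_k}) gap_weight al k a (map val (enum S)).
Proof.
pose G (S : {set 'I_k}) := gap_weight al k a (map val (enum S)).
have by_card j : (1 <= j < k.+1)%N ->
    (- al) ^+ (k - j) * q k j a (1 : R) =
    \sum_(S : {set 'I_k}) (if #|S| == j then G S else 0).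
  case/andP=> j_gt0 _; rewrite q_at1 // mulr_sumr big_mkcond /=; apply: eq_bigr => S _.
  case: (eqVneq #|S| j) => [cardS|//]; subst j.
  by rewrite sum_odd_pgap // /G /gap_weight -size_eq0 size_map -cardE (gtn_eqF j_gt0).
rewrite (eq_big_nat _ _ by_card) exchange_big /=; apply: eq_bigr => S _.
have card_le : (#|S| <= k)%N by rewrite -[k in (_ <= k)%N]card_ord max_card.
have [S0|S_gt0] := posnP #|S|.
  rewrite big_nat_cond big1 => [|j /andP [/andP [j_gt0 _] _]]; last first.
    by rewrite S0 (ltn_eqF j_gt0).
  by rewrite /G /gap_weight -size_eq0 size_map -cardE S0.
rewrite (bigD1_seq #|S|) /= ?iota_uniq ?mem_index_iota ?S_gt0 ?ltnS //.
by rewrite eqxx big1_seq ?addr0 // => j /andP [/negbTE nj _]; rewrite eq_sym nj.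
Qed.

Section Trace.

Variables (R : comPzRingType) (al : R).

Definition trace_term (a : nat) (bs : seq bool) : R :=
  walk_term al false false a bs + walk_term al true true a bs.

Lemma trace_weightE n a : trace_weight al n a = sum_bits n (trace_term a).
Proof. by rewrite /trace_weight /walk_weight -sum_bitsD. Qed.

(* Once a one has been read the final state no longer depends on the initial
   one, so exactly one of the two diagonal walks closes up. *)
Lemma gap_weight_ones a bs : has id bs ->
  gap_weight al (size bs) a (ones bs) = trace_term a bs.
Proof.
move=> bs1; rewrite /gap_weight /trace_term /walk_term (negbTE (has_ones bs1)).
have -> : (size bs - size (ones bs) = count negb bs)%N.
  by rewrite size_ones -(count_predC id bs) addKn.
have end_parity s : gap_parity s bs = gap_parity false bs by rewrite !gap_parity_ones.
have := odd_gap_count_cycle (gap_parity false bs) bs1; rewrite end_parity.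
case: (gap_parity false bs) end_parity => end_parity ->; rewrite !end_parity /=.
  by rewrite mulr0 add0r.
by rewrite mulr0 addr0.
Qed.

Lemma trace_term_zeros a n :
  trace_term a (nseq n false) = ((~~ odd n) && (a == 0%N))%:R * (- al) ^+ n *+ 2.
Proof.
rewrite /trace_term /walk_term !gap_parity_nseq_false !odd_gap_count_nseq_false.
rewrite (count_nseq negb) /= mul1n (eq_sym 0%N); case: (odd n); case: (a == 0%N) => /=;
by rewrite ?mulr0 ?mulr1 ?addr0 ?mul0r ?mul1r ?mul0rn ?mulr2n.
Qed.

Lemma sum_bits_gap_weight k a :
  sum_bits k (fun bs => gap_weight al k a (ones bs)) =
  trace_weight al k a - trace_term a (nseq k false).
Proof.
rewrite trace_weightE -(sum_bits_delta (nseq k false) (trace_term a)) size_nseq.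
rewrite -sum_bitsB; apply: eq_sum_bits => bs sz_bs.
have [/eqP ->|bs_ne0] := boolP (bs == nseq k false).
  by rewrite ones_nseq_false mul1r subrr.
rewrite mul0r subr0 -sz_bs gap_weight_ones //.
by apply: contraNT bs_ne0 => /hasNid_nseq ->; rewrite sz_bs.
Qed.

End Trace.

Theorem proposition5p2 (R : realFieldType) (alpha : R) :
  0 < alpha -> alpha < 1 ->
  forall k a : nat, (1 <= k)%N -> (a <= k)%N ->
  \sum_(1 <= j < k.+1) (- alpha) ^+ (k - j) * q k j a (1 : R) =
  if (a == 0%N) && ~~ odd k then
    (Tnum k./2 k./2)%:R * (alpha * (alpha - 1)) ^+ k./2 - 2 * alpha ^+ k
  else if (0 < a)%N && (odd a == odd k) then
    (Tnum (k + a)./2 (k - a)./2)%:R * (alpha * (alpha - 1)) ^+ (k - a)./2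
  else 0.
Proof.
move=> _ _ k a k_gt0 a_le_k.
rewrite sum_q1_gap_weight sum_set_bits sum_bits_gap_weight trace_weight_closed_form //.
rewrite trace_term_zeros /closed_form a_le_k /=.
case: a a_le_k => [|a] _ /=; last by rewrite andbF mul0r mul0rn subr0.
rewrite addn0 subn0; case: (boolP (odd k)) => [_|even_k] /=.
  by rewrite mul0r mul0rn subr0.
by rewrite mul1r exprNn -signr_odd (negbTE even_k) mul1r mulr2n mulrDl mul1r.
Qed.
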